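(* Let $\bm{A}\in\mathbb{R}^{M\times M}$ be diagonal with $\sigma_{\max}(\bm{A})<1$ (largest singular value), $\bm{W}\in\mathbb{R}^{M\times M}$, $\bm{h}_0\in\mathbb{R}^M$, $\alpha_1,\dots,\alpha_B\in\mathbb{R}$, $\bm{h}_1,\dots,\bm{h}_B\in\mathbb{R}^M$. Consider the ''clipped'' dendPLRNN $$\bm{z}_t=\bm{A}\bm{z}_{t-1}+\bm{W}\sum_{b=1}^B\alpha_b\big[\max(0,\bm{z}_{t-1}-\bm{h}_b)-\max(0,\bm{z}_{t-1})\big]+\bm{h}_0,$$ obtained from the dendPLRNN by adding, for each basis $(\alpha_b,\bm{h}_b)$, a basis $(-\alpha_b,\bm{0})$. Then for every initial condition $\bm{z}_1\in\mathbb{R}^M$ the orbit $(\bm{z}_t)_{t\ge1}$ is bounded.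
   Context: $\max$ is taken componentwise. *)

From HB Require Import structures.
From mathcomp Require Import all_boot all_order all_algebra.
From mathcomp Require Import classical_sets reals.
Set Implicit Arguments. Unset Strict Implicit. Unset Printing Implicit Defensive.
Import Order.TTheory GRing.Theory Num.Theory.
Local Open Scope ring_scope.

Definition norm2 (R : realType) (M : nat) (x : 'cV[R]_M) : R :=
  Num.sqrt (\sum_(i < M) x i 0 ^+ 2).

(* Largest singular value = operator 2-norm = sup_{|x|_2 = 1} |A x|_2. *)
Definition sigma_max (R : realType) (M : nat) (A : 'M[R]_M) : R :=
  reals.sup [set norm2 (A *m x) | x in [set x : 'cV[R]_M | norm2 x = 1]]%classic.

Definition relu (R : realType) (M : nat) (x : 'cV[R]_M) : 'cV[R]_M :=
  map_mx (fun r => Num.max 0 r) x.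

Definition clipped_step (R : realType) (M B : nat) (A W : 'M[R]_M)
  (h0 : 'cV[R]_M) (alpha : 'I_B -> R) (h : 'I_B -> 'cV[R]_M) (z : 'cV[R]_M)
  : 'cV[R]_M :=
  A *m z + W *m (\sum_(b < B) alpha b *: (relu (z - h b) - relu z)) + h0.

(* orbit t = z_{t+1}, i.e. orbit 0 = z_1. *)
Definition clipped_orbit (R : realType) (M B : nat) (A W : 'M[R]_M)
  (h0 : 'cV[R]_M) (alpha : 'I_B -> R) (h : 'I_B -> 'cV[R]_M) (z1 : 'cV[R]_M)
  (t : nat) : 'cV[R]_M :=
  iter t (clipped_step A W h0 alpha h) z1.

From HB Require Import structures.
From mathcomp Require Import all_boot all_order all_algebra.
From mathcomp Require Import classical_sets reals.
From mathcomp Require Import lra.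
Import Order.TTheory GRing.Theory Num.Theory.
Local Open Scope ring_scope.

(* ReLU is 1-Lipschitz, so each clipped term [relu (z - h_b) - relu z] is
   bounded componentwise by [|h_b|], independently of [z].  With [A] diagonal,
   coordinate [i] of the orbit therefore obeys [|z_{t+1,i}| <= |a_i| |z_{t,i}| + K_i],
   where [|a_i| <= sigma_max A < 1]; such a contracting recurrence stays below
   [max (|z_{1,i}|, K_i / (1 - |a_i|))]. *)

Lemma dist_max0_le (R : realDomainType) (x y : R) :
  `|Num.max 0 x - Num.max 0 y| <= `|x - y|.
Proof.
rewrite /Num.max; case: (ltrP 0 x) => hx; case: (ltrP 0 y) => hy //.
- rewrite subr0 !ger0_norm; lra.
- rewrite sub0r normrN (gtr0_norm hy) ler0_norm; lra.
- by rewrite subrr normr0.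
Qed.

Lemma relu_shift_bound (R : realType) (M : nat) (z c : 'cV[R]_M) (j : 'I_M) :
  `|(relu (z - c) - relu z) j 0| <= `|c j 0|.
Proof.
rewrite !mxE; apply: le_trans (dist_max0_le _ (z j 0 - c j 0) (z j 0)) _.
by rewrite addrAC subrr add0r normrN.
Qed.

Lemma contraction_recurrence_bound (R : realFieldType) (a K : R) (u : nat -> R) :
  0 <= a -> a < 1 -> (forall t, u t.+1 <= a * u t + K) ->
  forall t, u t <= Num.max (u 0%N) (K / (1 - a)).
Proof.
move=> a_ge0 a_lt1 u_rec; set C := Num.max _ _.
have K_le : K <= C * (1 - a).
  by rewrite -ler_pdivrMr ?subr_gt0 // le_max lexx orbT.
elim=> [|t IH]; first by rewrite le_max lexx.
have := ler_wpM2l a_ge0 IH; have := u_rec t; lra.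
Qed.

Section Norm2.
Context {R : realType} {M : nat}.

Lemma norm2_le_sqrt_sum (x : 'cV[R]_M) (c : 'I_M -> R) :
  (forall i, `|x i 0| <= c i) -> norm2 x <= Num.sqrt (\sum_i c i ^+ 2).
Proof.
move=> x_le; rewrite /norm2 ler_sqrt; last by apply: sumr_ge0 => i _; exact: sqr_ge0.
apply: ler_sum => i _; rewrite -real_normK ?num_real // !expr2.
by apply: ler_pM.
Qed.

Lemma norm2_delta (i : 'I_M) : norm2 (delta_mx i 0 : 'cV[R]_M) = 1.
Proof.
rewrite /norm2 (bigD1 i) //= big1 ?mxE ?eqxx ?addr0 ?expr1n ?sqrtr1 //.
by move=> k /negbTE k_neq; rewrite mxE k_neq expr0n.
Qed.

Lemma norm2_diag_delta (d : 'rV[R]_M) (i : 'I_M) :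
  norm2 (diag_mx d *m delta_mx i 0) = `|d 0 i|.
Proof.
rewrite /norm2 mul_diag_mx (bigD1 i) //= big1 ?mxE ?eqxx ?addr0 ?mulr1 ?sqrtr_sqr //.
by move=> k /negbTE k_neq; rewrite !mxE k_neq mulr0 expr0n.
Qed.

Lemma norm2_diag_mul_le (d : 'rV[R]_M) (x : 'cV[R]_M) :
  norm2 (diag_mx d *m x) <= Num.sqrt (\sum_k d 0 k ^+ 2) * norm2 x.
Proof.
have sq_ge0 (f : 'I_M -> R) : 0 <= \sum_k f k ^+ 2.
  by apply: sumr_ge0 => k _; exact: sqr_ge0.
rewrite /norm2 -sqrtrM ?sq_ge0 // ler_sqrt ?mulr_ge0 ?sq_ge0 //.
rewrite mul_diag_mx mulr_sumr; apply: ler_sum => k _; rewrite mxE exprMn.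
apply: ler_wpM2r; first exact: sqr_ge0.
rewrite (bigD1 k) //= lerDl; apply: sumr_ge0 => j _; exact: sqr_ge0.
Qed.

Lemma norm_diag_le_sigma_max (d : 'rV[R]_M) (i : 'I_M) :
  `|d 0 i| <= sigma_max (diag_mx d).
Proof.
rewrite -norm2_diag_delta; apply: sup_upper_bound; last by exists (delta_mx i 0); rewrite /= ?norm2_delta.
split; first by exists (norm2 (diag_mx d *m delta_mx i 0)), (delta_mx i 0);
  rewrite /= ?norm2_delta.
exists (Num.sqrt (\sum_k d 0 k ^+ 2)) => _ [x /= x_unit <-].
by rewrite -[leRHS]mulr1 -x_unit norm2_diag_mul_le.
Qed.

End Norm2.

Section ClippedStep.
Context {R : realType} {M B : nat}.
Variables (d : 'rV[R]_M) (W : 'M[R]_M).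
Variables (h0 : 'cV[R]_M) (alpha : 'I_B -> R) (h : 'I_B -> 'cV[R]_M).

Definition clipped_drift (i : 'I_M) : R :=
  \sum_j `|W i j| * (\sum_b `|alpha b| * `|h b j 0|) + `|h0 i 0|.

Lemma clipped_step_coord_le (z : 'cV[R]_M) (i : 'I_M) :
  `|clipped_step (diag_mx d) W h0 alpha h z i 0|
    <= `|d 0 i| * `|z i 0| + clipped_drift i.
Proof.
rewrite /clipped_step mul_diag_mx !mxE -addrA -normrM.
apply: le_trans (ler_normD _ _) _; rewrite lerD2l.
apply: le_trans (ler_normD _ _) _; rewrite lerD2r.
apply: le_trans (ler_norm_sum _ _ _) _; apply: ler_sum => j _.
rewrite normrM; apply: ler_wpM2l => //.
rewrite summxE; apply: le_trans (ler_norm_sum _ _ _) _; apply: ler_sum => b _.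
by rewrite mxE normrM; apply: ler_wpM2l => //; exact: relu_shift_bound.
Qed.

End ClippedStep.

Theorem theorem2 (R : realType) (M B : nat) (A W : 'M[R]_M) (h0 : 'cV[R]_M)
  (alpha : 'I_B -> R) (h : 'I_B -> 'cV[R]_M)
  (hAdiag : is_diag_mx A) (hA : sigma_max A < 1) :
  forall z1 : 'cV[R]_M, exists C : R,
    forall t : nat, norm2 (clipped_orbit A W h0 alpha h z1 t) <= C.
Proof.
move=> z1; case/diag_mxP: hAdiag => d A_def; subst A.
pose u i t := `|clipped_orbit (diag_mx d) W h0 alpha h z1 t i 0|.
pose K i := clipped_drift W h0 alpha h i.
pose C i := Num.max (u i 0%N) (K i / (1 - `|d 0 i|)).
exists (Num.sqrt (\sum_i C i ^+ 2)) => t; apply: norm2_le_sqrt_sum => i.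
apply: (contraction_recurrence_bound _ _ _ (u i)) => //.
- exact: le_lt_trans (norm_diag_le_sigma_max d i) hA.
- by move=> s; rewrite /u /clipped_orbit iterS; exact: clipped_step_coord_le.
Qed.
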